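(* Let $A_1\in N_p$ and $A_2\in N_q$ be Belitskii canonical forms (under $B_p$- and $B_q$-similarity respectively), with $A_1\in Q_1U_p$ and $A_2\in Q_2U_q$ for subpermutations $Q_1\in N_p$ and $Q_2\in N_q$. If $Q_{12}\in M_{p,q}(\mathbb F)$ is such that $\begin{pmatrix}Q_1&Q_{12}\\0&Q_2\end{pmatrix}$ is a subpermutation, then $\begin{pmatrix}A_1&Q_{12}\\0&A_2\end{pmatrix}$ is a Belitskii canonical form in $N_{p+q}$ (under $B_{p+q}$-similarity).
   Context: $\mathbb F$ is a field. For each $m$, $B_m$ (resp. $U_m$, $N_m$) denotes the set of $m\times m$ invertible upper triangular (resp. upper triangular with all diagonal entries $1$, strictly upper triangular) matrices over $\mathbb F$; $M_{p,q}(\mathbb F)$ is the set of $p\times q$ matrices; $QU_m=\{QU:U\in U_m\}$. A subpermutation is a matrix each of whose rows and columns has at most one nonzero entry, and that entry equals $1$. Matrices $A,C$ are $G$-similar if $C=BAB^{-1}$ for some $B\in G$. Belitskii order on positions $\{(i,j):1\le i<j\le m\}$: $(i,j)\prec(i',j')$ iff $i>i'$, or $i=i'$ and $j<j'$ (so $(m-1,m)\prec(m-2,m-1)\prec(m-2,m)\prec\cdots\prec(1,m)$). Belitskii's algorithm for $B_m$-similarity on $N_m$: given $A\in N_m$ put $A^{(0)}=A$, $G^{(0)}=B_m$. For $k=0,1,\dots$, let $(p',q')$ be the $(k+1)$th position in Belitskii order and look at the $(p',q')$ entries of all matrices $G^{(k)}$-similar to $A^{(k)}$: (a) if this entry is always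 $0$ or can take every value of $\mathbb F$, choose $A^{(k+1)}$ $G^{(k)}$-similar to $A^{(k)}$ with that entry $0$; (b) if it takes exactly the values of $\mathbb F\setminus\{0\}$, choose $A^{(k+1)}$ with that entry $1$; (c) otherwise it is a constant $\lambda\neq 0$ and $A^{(k+1)}=A^{(k)}$. $G^{(k+1)}$ is the subgroup of $g\in G^{(k)}$ such that $gA^{(k+1)}g^{-1}$ agrees with $A^{(k+1)}$ in the first $k+1$ positions. The final matrix is the Belitskii canonical form of $A$; a matrix is a Belitskii canonical form if it is the Belitskii canonical form of some matrix. *)

From HB Require Import structures.
From mathcomp Require Import all_boot all_order all_algebra.
Set Implicit Arguments. Unset Strict Implicit. Unset Printing Implicit Defensive.
Import GRing.Theory.
Local Open Scope ring_scope.

Section Belitskii.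
Variable F : fieldType.

Definition strict_upper m (A : 'M[F]_m) : Prop :=
  forall i j : 'I_m, (j <= i)%N -> A i j = 0.

Definition inv_upper m (A : 'M[F]_m) : Prop :=
  A \in unitmx /\ forall i j : 'I_m, (j < i)%N -> A i j = 0.

Definition unipotent_upper m (A : 'M[F]_m) : Prop :=
  (forall i j : 'I_m, (j < i)%N -> A i j = 0) /\ (forall i : 'I_m, A i i = 1).

Definition subperm_mx m n (A : 'M[F]_(m, n)) : Prop :=
  (forall i j, A i j = 0 \/ A i j = 1) /\
  (forall i j j', A i j != 0 -> A i j' != 0 -> j = j') /\
  (forall i i' j, A i j != 0 -> A i' j != 0 -> i = i').

(* positions (i,j), i<j, in Belitskii order: i decreasing, then j increasing *)
Definition bel_positions m : seq ('I_m * 'I_m) :=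
  [seq (i, j) | i : 'I_m <- rev (enum 'I_m), j : 'I_m <- [seq j : 'I_m <- enum 'I_m | (i < j)%N]].

Definition conjmx m (g A : 'M[F]_m) : 'M[F]_m := g *m A *m invmx g.

Definition agree_first m (k : nat) (B A : 'M[F]_m) : Prop :=
  forall ij, ij \in take k (bel_positions m) -> B ij.1 ij.2 = A ij.1 ij.2.

Definition bel_group m (Aseq : nat -> 'M[F]_m) (k : nat) (g : 'M[F]_m) : Prop :=
  inv_upper g /\
  forall l, (l < k)%N -> agree_first l.+1 (conjmx g (Aseq l.+1)) (Aseq l.+1).

Definition bel_values m (Aseq : nat -> 'M[F]_m) (k : nat) (ij : 'I_m * 'I_m)
  (x : F) : Prop :=
  exists2 g, bel_group Aseq k g & (conjmx g (Aseq k)) ij.1 ij.2 = x.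

Definition bel_step m (Aseq : nat -> 'M[F]_m) (k : nat) (ij : 'I_m * 'I_m) : Prop :=
  let S := bel_values Aseq k ij in
  let caseA := (forall x, S x -> x = 0) \/ (forall x, S x) in
  let caseB := forall x, S x <-> x != 0 in
  (caseA -> exists2 g, bel_group Aseq k g &
              Aseq k.+1 = conjmx g (Aseq k) /\ (Aseq k.+1) ij.1 ij.2 = 0) /\
  (~ caseA -> caseB -> exists2 g, bel_group Aseq k g &
              Aseq k.+1 = conjmx g (Aseq k) /\ (Aseq k.+1) ij.1 ij.2 = 1) /\
  (~ caseA -> ~ caseB -> Aseq k.+1 = Aseq k).

(* A is a Belitskii canonical form: the final matrix of some run of the
   algorithm (with any admissible choices) started at some A0 in N_m *)
Definition belitskii_canonical m (A : 'M[F]_m) : Prop :=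
  exists Aseq : nat -> 'M[F]_m,
    [/\ strict_upper (Aseq 0%N),
        (forall k ij, onth (bel_positions m) k = Some ij -> bel_step Aseq k ij)
      & Aseq (size (bel_positions m)) = A].

End Belitskii.

(* A strictly upper triangular matrix is a Belitskii canonical form iff it is
   left unchanged by the algorithm, i.e. every nonzero entry is normal: over
   the stabiliser of the earlier positions it does not take every value, and
   if it takes exactly the nonzero values then it equals 1.  Conjugating by an
   upper triangular matrix changes an entry only through entries at earlier or
   equal positions, so the stabilisers along any run can be read off the final
   matrix, and the constant run at a normal matrix is admissible.

   For M = [A1 Q12; 0 A2], stabilisers of M restrict to stabilisers of A1 and
   A2 on the diagonal blocks, so nonzero entries there remain normal.  A
   nonzero entry of Q12 is 1 and stays nonzero under the stabiliser: M = Q U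
   with Q the block subpermutation and U unipotent upper triangular, the
   column of Q through that entry is a unit vector, and the entries to its
   left in its row are fixed to 0. *)

From mathcomp Require Import all_boot all_order all_algebra.
From mathcomp Require Import zify.
From Stdlib Require Import Classical.
(* Imported after mathcomp so that [conjmx] is [Defs.conjmx], not [mxred.conjmx]. *)
From Pilot Require Import Defs.
Set Implicit Arguments. Unset Strict Implicit. Unset Printing Implicit Defensive.
Import GRing.Theory.
Local Open Scope ring_scope.

Section BelitskiiOrder.
Variable m : nat.
Implicit Types x y : 'I_m * 'I_m.

Definition bel_lt x y : bool :=
  (y.1 < x.1)%N || ((x.1 == y.1 :> nat) && (x.2 < y.2)%N).

Lemma bel_lt_irr x : ~~ bel_lt x x.
Proof. by rewrite /bel_lt; apply/negP => /orP [] /=; lia. Qed.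

Lemma bel_lt_asym x y : bel_lt x y -> ~~ bel_lt y x.
Proof. by rewrite /bel_lt => /orP [] H; apply/negP => /orP []; lia. Qed.

Lemma mem_bel_positions x : (x \in bel_positions m) = (x.1 < x.2)%N.
Proof.
apply/allpairsPdep/idP => [[i [j [_ + ->]]] | lt_x].
  by rewrite mem_filter => /andP [].
exists x.1, x.2; split; rewrite ?mem_rev ?mem_filter ?lt_x -?enumT ?mem_enum //.
by case: x {lt_x}.
Qed.

Lemma pairwise_bel_positions : pairwise bel_lt (bel_positions m).
Proof.
have rows_desc : pairwise (fun a b : 'I_m => (b < a)%N) (rev (enum 'I_m)).
  rewrite -(pairwise_map val (fun a b => b < a)%N) map_rev val_enum_ord.
  rewrite -sorted_pairwise ?rev_sorted ?iota_ltn_sorted //.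
  by move=> a b c /= lt_ba lt_cb; apply: ltn_trans lt_cb lt_ba.
have row_pw (i : 'I_m) :
    pairwise bel_lt [seq (i, j) | j : 'I_m <- [seq j : 'I_m <- enum 'I_m | (i < j)%N]].
  rewrite pairwise_map; apply/pairwise_filter.
  apply: (sub_pairwise (r := relpre (val : 'I_m -> nat) ltn)).
    by move=> a b /= lt_ab; rewrite /bel_lt /= eqxx lt_ab orbT.
  rewrite -pairwise_map val_enum_ord -sorted_pairwise ?iota_ltn_sorted //.
  exact: ltn_trans.
move: rows_desc; rewrite /bel_positions.
elim: (rev _) => [|i r IH] //= /andP [i_gt r_desc].
rewrite pairwise_cat row_pw IH // !andbT.
apply/allrelP => x y /mapP [j _ ->] /allpairsPdep [i' [j' [i'_r _ ->]]].
by rewrite /bel_lt /= (allP i_gt i' i'_r).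
Qed.

Lemma mem_take_bel_positions k ij x : onth (bel_positions m) k = Some ij ->
  (x \in take k (bel_positions m)) = (x.1 < x.2)%N && bel_lt x ij.
Proof.
move=> kth; set s := bel_positions m; rewrite -mem_bel_positions.
have k_lt : (k < size s)%N by rewrite -onthTE kth.
have nth_k : nth ij s k = ij by apply: onth_nth.
have [x_s | x_s] := boolP (x \in s); last by apply/negP => /mem_take; apply/negP.
rewrite in_take //=.
have nth_x : nth ij s (index x s) = x by rewrite nth_index.
have x_lt : (index x s < size s)%N by rewrite index_mem.
have lt_nth := pairwiseP ij pairwise_bel_positions.
case: (ltngtP (index x s) k) => [lt_xk | lt_kx | eq_xk].
- by have := lt_nth _ _ x_lt k_lt lt_xk; rewrite nth_x nth_k => ->.
- have := lt_nth _ _ k_lt x_lt lt_kx; rewrite nth_x nth_k.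
  by move=> /bel_lt_asym /negbTE ->.
- by rewrite -nth_x eq_xk nth_k (negbTE (bel_lt_irr _)).
Qed.

Lemma mem_take_onth_bel_positions k ij : onth (bel_positions m) k = Some ij ->
  ij \in take k.+1 (bel_positions m).
Proof.
move=> kth; have k_lt : (k < size (bel_positions m))%N by rewrite -onthTE kth.
by rewrite (take_nth ij k_lt) (onth_nth ij _ _ _ kth) mem_rcons mem_head.
Qed.

Lemma take_bel_positions_closed r x y : x \in take r (bel_positions m) ->
  (y.1 < y.2)%N -> bel_lt y x -> y \in take r (bel_positions m).
Proof.
move=> x_r lt_y lt_yx; set s := bel_positions m in x_r *.
have x_s := mem_take x_r; rewrite in_take // in x_r.
have kth : onth s (index x s) = Some x.
  by rewrite onthE (nth_map x) ?index_mem ?nth_index.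
have : y \in take (index x s) s by rewrite (mem_take_bel_positions _ kth) lt_y.
by rewrite -(take_takel _ (ltnW x_r)) => /mem_take.
Qed.

End BelitskiiOrder.

Section UpperTriangular.
Variable F : fieldType.

Definition upper_mx m (g : 'M[F]_m) : Prop :=
  forall i j : 'I_m, (j < i)%N -> g i j = 0.

Lemma upper_mx_unitmxE m (g : 'M[F]_m) :
  upper_mx g -> (g \in unitmx) = [forall i, g i i != 0].
Proof.
move=> g_up; rewrite unitmxE unitfE -det_tr det_trig; last first.
  by apply/is_trig_mxP => i j lt_ij; rewrite mxE g_up.
apply/prodf_neq0/forallP => [g_ii i | g_ii i _]; last by rewrite mxE.
by have := g_ii i isT; rewrite mxE.
Qed.

Lemma inv_upper_diag_neq0 m (g : 'M[F]_m) i : inv_upper g -> g i i != 0.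
Proof. by case=> g_unit g_up; move: g_unit; rewrite upper_mx_unitmxE // => /forallP. Qed.

Lemma upper_mx_mul m (a b : 'M[F]_m) : upper_mx a -> upper_mx b -> upper_mx (a *m b).
Proof.
move=> a_up b_up i j lt_ji; rewrite mxE big1 // => k _.
have [lt_ki | le_ik] := ltnP k i; first by rewrite a_up ?mul0r.
by rewrite b_up ?mulr0 // (leq_trans lt_ji le_ik).
Qed.

Lemma upper_mx_invmx m (g : 'M[F]_m) : inv_upper g -> upper_mx (invmx g).
Proof.
move=> g_inv; have [g_unit g_up] := g_inv.
have gVg : invmx g *m g = 1%:M by rewrite mulVmx.
move=> i j; have [n] := ubnP j; elim: n j => // n IH j lt_jn lt_ji.
have := congr1 (fun M : 'M[F]_m => M i j) gVg.
rewrite !mxE (gtn_eqF lt_ji : (i == j) = false).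
rewrite (bigD1 j) //= big1 ?addr0 => [/eqP | k k_neq_j].
  by rewrite mulf_eq0 (negbTE (inv_upper_diag_neq0 j g_inv)) orbF => /eqP.
case: (ltngtP k j) => [lt_kj | lt_jk | /val_inj eq_kj].
- by rewrite IH ?mul0r //; lia.
- by rewrite g_up ?mulr0.
- by rewrite eq_kj eqxx in k_neq_j.
Qed.

Lemma inv_upper_mul m (a b : 'M[F]_m) :
  inv_upper a -> inv_upper b -> inv_upper (a *m b).
Proof.
case=> a_unit a_up [b_unit b_up]; split; first by rewrite unitmx_mul a_unit.
exact: upper_mx_mul.
Qed.

Lemma inv_upper_invmx m (g : 'M[F]_m) : inv_upper g -> inv_upper (invmx g).
Proof.
by move=> g_inv; split; [rewrite unitmx_inv; case: g_inv | exact: upper_mx_invmx].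
Qed.

Lemma inv_upper1 m : inv_upper (1%:M : 'M[F]_m).
Proof.
by split=> [|i j lt_ji]; rewrite ?unitmx1 // mxE (gtn_eqF lt_ji : (i == j) = false).
Qed.

Lemma conjmxE m (g X : 'M[F]_m) : g \in unitmx -> conjmx g X = mxred.conjmx g X.
Proof. by move=> g_unit; rewrite conjumx. Qed.

Lemma conjmx_mul m (g h X : 'M[F]_m) : g \in unitmx -> h \in unitmx ->
  conjmx (g *m h) X = conjmx g (conjmx h X).
Proof. by move=> g_unit h_unit; rewrite !conjmxE ?unitmx_mul ?g_unit // conjuMumx. Qed.

Lemma conjmx_invK m (g X : 'M[F]_m) :
  g \in unitmx -> conjmx (invmx g) (conjmx g X) = X.
Proof. by move=> g_unit; rewrite !conjmxE ?unitmx_inv // mxred.conjmxK. Qed.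

Lemma conjmx1 m (X : 'M[F]_m) : conjmx 1%:M X = X.
Proof. by rewrite conjmxE ?unitmx1 // conj1mx. Qed.

Lemma conjmx_entry m (g X : 'M[F]_m) i j :
  conjmx g X i j = \sum_b \sum_a g i a * X a b * invmx g b j.
Proof. by rewrite mxE; apply: eq_bigr => b _; rewrite mxE mulr_suml. Qed.

Lemma upper_mx_conjmx m (g X : 'M[F]_m) :
  inv_upper g -> upper_mx X -> upper_mx (conjmx g X).
Proof.
by move=> g_inv X_up; do 2?apply: upper_mx_mul; [case: g_inv | | exact: upper_mx_invmx].
Qed.

Lemma strict_upper_conjmx m (g X : 'M[F]_m) : inv_upper g -> strict_upper X ->
  strict_upper (conjmx g X).
Proof.
move=> g_inv X_su i j le_ji; have [_ g_up] := g_inv; have gV_up := upper_mx_invmx g_inv.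
rewrite conjmx_entry big1 // => b _; rewrite big1 // => a _.
have [lt_ai | le_ia] := ltnP a i; first by rewrite g_up ?mul0r.
have [lt_jb | le_bj] := ltnP j b; first by rewrite gV_up ?mulr0.
by rewrite X_su ?mulr0 ?mul0r //; lia.
Qed.

End UpperTriangular.

Section Stabilizer.
Variables (F : fieldType) (m : nat).
Implicit Types X Y Z g h : 'M[F]_m.

Definition bel_stab k X g : Prop := inv_upper g /\ agree_first k (conjmx g X) X.

Lemma agree_first0 X Y : agree_first 0 X Y.
Proof. by move=> ij; rewrite take0. Qed.

Lemma agree_first_le r r' X Y :
  (r <= r')%N -> agree_first r' X Y -> agree_first r X Y.
Proof.
move=> le_rr' XY ij ij_r; apply: XY.
by rewrite -(take_takel _ le_rr') in ij_r; exact: mem_take ij_r.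
Qed.

Lemma agree_first_sym r X Y : agree_first r X Y -> agree_first r Y X.
Proof. by move=> XY ij ij_r; rewrite XY. Qed.

Lemma agree_first_trans r X Y Z :
  agree_first r X Y -> agree_first r Y Z -> agree_first r X Z.
Proof. by move=> XY YZ ij ij_r; rewrite XY // YZ. Qed.

(* Entry (i, j) of g X g^-1 only involves entries (a, b) of X with i <= a and
   b <= j, and these positions come no later than (i, j) in Belitskii order. *)
Lemma agree_first_conjmx r g X Y :
  inv_upper g -> strict_upper X -> strict_upper Y ->
  agree_first r X Y -> agree_first r (conjmx g X) (conjmx g Y).
Proof.
move=> g_inv X_su Y_su XY [i j] ij_r /=.
have [_ g_up] := g_inv; have gV_up := upper_mx_invmx g_inv.
rewrite !conjmx_entry; apply: eq_bigr => b _; apply: eq_bigr => a _.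
have [lt_ai | le_ia] := ltnP a i; first by rewrite g_up ?mul0r.
have [lt_jb | le_bj] := ltnP j b; first by rewrite gV_up ?mulr0.
have [lt_ab | le_ba] := ltnP a b; last by rewrite X_su ?Y_su.
rewrite (XY (a, b)) //; have [-> // | ab_neq_ij] := eqVneq (a, b) (i, j).
apply: (take_bel_positions_closed (y := (a, b)) ij_r) => //.
by move: ab_neq_ij; rewrite xpair_eqE -!val_eqE /bel_lt /=; lia.
Qed.

Lemma bel_stab_agree r g X Y : strict_upper X -> strict_upper Y ->
  agree_first r X Y -> bel_stab r X g -> bel_stab r Y g.
Proof.
move=> X_su Y_su XY [g_inv gX]; split=> //.
apply: agree_first_trans (agree_first_conjmx g_inv Y_su X_su (agree_first_sym XY)) _.
exact: agree_first_trans gX XY.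
Qed.

Lemma bel_stab1 r X : bel_stab r X 1%:M.
Proof. by split; [exact: inv_upper1 | rewrite conjmx1]. Qed.

Lemma bel_stab_mul r X g h : strict_upper X ->
  bel_stab r X g -> bel_stab r X h -> bel_stab r X (g *m h).
Proof.
move=> X_su [g_inv gX] [h_inv hX]; split; first exact: inv_upper_mul.
rewrite conjmx_mul; [|by case: g_inv|by case: h_inv].
by apply: agree_first_trans gX; apply: agree_first_conjmx (strict_upper_conjmx _ _) _ _.
Qed.

Lemma bel_stab_invmx r X g : strict_upper X -> bel_stab r X g -> bel_stab r X (invmx g).
Proof.
move=> X_su [g_inv gX]; split; first exact: inv_upper_invmx.
have gX_strict := strict_upper_conjmx g_inv X_su.
have := agree_first_conjmx (inv_upper_invmx g_inv) gX_strict X_su gX.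
by rewrite conjmx_invK; [exact: agree_first_sym | case: g_inv].
Qed.

End Stabilizer.

Section Stability.
Variable F : fieldType.

Definition normal_entry (S : F -> Prop) (v : F) : Prop :=
  ~ (forall x, S x) /\ ((forall x, S x <-> x != 0) -> v = 1).

Lemma normal_entry_sub (S T : F -> Prop) v :
  (forall x, S x -> T x) -> normal_entry T v -> normal_entry S v.
Proof.
move=> ST [T_not_all T_nz]; split=> [S_all | S_nz].
  by apply: T_not_all => x; exact: ST.
apply: T_nz => x; split=> [Tx | /S_nz /ST //]; apply/eqP => x0; apply: T_not_all => y.
by have [-> | y_nz] := eqVneq y 0; [rewrite -x0 | apply/ST/S_nz].
Qed.

Definition stab_values m k (X : 'M[F]_m) (ij : 'I_m * 'I_m) (x : F) : Prop :=
  exists2 g, bel_stab k X g & conjmx g X ij.1 ij.2 = x.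

Definition bel_stable m (X : 'M[F]_m) : Prop :=
  forall k ij, onth (bel_positions m) k = Some ij -> X ij.1 ij.2 != 0 ->
  normal_entry (stab_values k X ij) (X ij.1 ij.2).

Lemma bel_step_normal m (Aseq : nat -> 'M[F]_m) k ij :
  bel_step Aseq k ij -> Aseq k.+1 ij.1 ij.2 != 0 ->
  normal_entry (bel_values Aseq k ij) (Aseq k.+1 ij.1 ij.2).
Proof.
move=> [stepA [stepB _]] entry_nz; split=> [all_values | values_nz].
  have [g _ [_ entry0]] := stepA (or_intror all_values).
  by rewrite entry0 eqxx in entry_nz.
have not_caseA : ~ ((forall x, bel_values Aseq k ij x -> x = 0) \/
                    (forall x, bel_values Aseq k ij x)).
  case=> [values0 | all_values].
    by have /eqP := values0 _ ((values_nz 1).2 (oner_neq0 _)); rewrite oner_eq0.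
  by have := (values_nz 0).1 (all_values 0); rewrite eqxx.
by have [g _ []] := stepB not_caseA values_nz.
Qed.

Lemma bel_group_agree m (Aseq : nat -> 'M[F]_m) k g :
  bel_group Aseq k g -> agree_first k (conjmx g (Aseq k)) (Aseq k).
Proof. by case: k => [|k] [_ gA]; [exact: agree_first0 | exact: gA]. Qed.

Lemma bel_group_const m (M g : 'M[F]_m) k :
  bel_group (fun=> M) k g <-> bel_stab k M g.
Proof.
split=> [g_grp | [g_inv gM]].
  by split; [case: g_grp | exact: bel_group_agree].
by split=> // l lt_lk; exact: agree_first_le lt_lk gM.
Qed.

Lemma bel_step_const m (M : 'M[F]_m) k ij :
  (M ij.1 ij.2 != 0 -> normal_entry (bel_values (fun=> M) k ij) (M ij.1 ij.2)) ->
  bel_step (fun=> M) k ij.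
Proof.
move=> M_normal.
have one_grp : bel_group (fun=> M) k 1%:M by apply/bel_group_const/bel_stab1.
have M_value : bel_values (fun=> M) k ij (M ij.1 ij.2) by exists 1%:M; rewrite ?conjmx1.
split; [|split] => // [caseA | _ values_nz]; exists 1%:M; rewrite ?conjmx1 //; split=> //.
  have [-> // | entry_nz] := eqVneq (M ij.1 ij.2) 0.
  have [not_all _] := M_normal entry_nz.
  by case: caseA => [values0 | all_values]; [exact: values0 | case: not_all].
by apply: (M_normal _).2 => //; exact/values_nz.
Qed.

End Stability.

Section Run.
Variables (F : fieldType) (m : nat) (Aseq : nat -> 'M[F]_m).
Hypothesis Aseq0_strict : strict_upper (Aseq 0).
Hypothesis Aseq_step :
  forall k ij, onth (bel_positions m) k = Some ij -> bel_step Aseq k ij.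
Local Notation n := (size (bel_positions m)).

Lemma run_step k : (k < n)%N ->
  exists2 g, bel_group Aseq k g & Aseq k.+1 = conjmx g (Aseq k).
Proof.
rewrite -onthTE; case kth: onth => [ij|] // _.
have [stepA [stepB stepC]] := Aseq_step kth.
have [caseA | not_caseA] := classic ((forall x, bel_values Aseq k ij x -> x = 0) \/
                                     (forall x, bel_values Aseq k ij x)).
  by have [g g_grp []] := stepA caseA; exists g.
have [caseB | not_caseB] := classic (forall x, bel_values Aseq k ij x <-> x != 0).
  by have [g g_grp []] := stepB not_caseA caseB; exists g.
exists 1%:M; last by rewrite conjmx1 stepC.
by split=> [|l _]; rewrite ?conjmx1 //; exact: inv_upper1.
Qed.

Lemma run_strict k : (k <= n)%N -> strict_upper (Aseq k).
Proof.
elim: k => [|k IH] lt_kn //; have [g [g_inv _] ->] := run_step lt_kn.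
by apply: strict_upper_conjmx g_inv (IH (ltnW lt_kn)).
Qed.

Lemma run_agree l k : (l <= k)%N -> (k <= n)%N -> agree_first l (Aseq k) (Aseq l).
Proof.
elim: k => [|k IH]; first by rewrite leqn0 => /eqP ->.
rewrite leq_eqVlt ltnS => /predU1P [-> // | le_lk] lt_kn.
apply: agree_first_trans (IH le_lk (ltnW lt_kn)).
have [g /bel_group_agree gA ->] := run_step lt_kn; exact: agree_first_le le_lk gA.
Qed.

Lemma run_group k g : (k < n)%N -> bel_group Aseq k g <-> bel_stab k (Aseq n) g.
Proof.
move=> lt_kn; have k_strict := run_strict (ltnW lt_kn).
have final_strict := run_strict (leqnn n).
have agree_final l : (l <= k)%N -> agree_first l (Aseq n) (Aseq l).
  by move=> le_lk; apply: run_agree (leq_trans le_lk (ltnW lt_kn)) _.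
split=> [g_grp | g_stab].
  apply: bel_stab_agree k_strict final_strict (agree_first_sym (agree_final _ _)) _ => //.
  by split; [case: g_grp | exact: bel_group_agree].
split=> [|l lt_lk]; first by case: g_stab.
have l_strict := run_strict (leq_trans lt_lk (ltnW lt_kn)).
have g_stab_l : bel_stab l.+1 (Aseq n) g.
  by case: g_stab => g_inv gA; split=> //; exact: agree_first_le lt_lk gA.
by case: (bel_stab_agree final_strict l_strict (agree_final _ lt_lk) g_stab_l).
Qed.

Lemma run_values k ij x : onth (bel_positions m) k = Some ij ->
  bel_values Aseq k ij x <-> stab_values k (Aseq n) ij x.
Proof.
move=> kth; have lt_kn : (k < n)%N by rewrite -onthTE kth.
have final_strict := run_strict (leqnn n).
have [h h_grp step_k] := run_step lt_kn.
have h_stab : bel_stab k (Aseq n) h by apply/run_group.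
have [[h_unit _] _] := h_stab.
have entry_final g : inv_upper g ->
    conjmx g (Aseq n) ij.1 ij.2 = conjmx g (Aseq k.+1) ij.1 ij.2.
  move=> g_inv; apply: (agree_first_conjmx g_inv final_strict (run_strict lt_kn)).
    exact: run_agree.
  exact: mem_take_onth_bel_positions kth.
split=> [[g /(run_group _ lt_kn) g_stab <-] | [g g_stab <-]].
  have gh_stab := bel_stab_mul final_strict g_stab (bel_stab_invmx final_strict h_stab).
  have [[g_unit _] _] := g_stab.
  exists (g *m invmx h) => //; rewrite entry_final; last by case: gh_stab.
  by rewrite step_k conjmx_mul ?unitmx_inv // conjmx_invK.
have [[g_unit _] _] := g_stab.
exists (g *m h); first by apply/run_group/bel_stab_mul.
by rewrite conjmx_mul // -step_k entry_final //; case: g_stab.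
Qed.

Lemma run_final_stable : bel_stable (Aseq n).
Proof.
move=> k ij kth entry_nz; have lt_kn : (k < n)%N by rewrite -onthTE kth.
have entry_eq : Aseq n ij.1 ij.2 = Aseq k.+1 ij.1 ij.2.
  by apply: (run_agree lt_kn (leqnn n)); exact: mem_take_onth_bel_positions kth.
rewrite entry_eq in entry_nz *.
apply: normal_entry_sub (bel_step_normal (Aseq_step kth) entry_nz) => x.
by move/(run_values x kth).
Qed.

End Run.

Lemma belitskii_canonical_stable (F : fieldType) m (A : 'M[F]_m) :
  belitskii_canonical A -> strict_upper A /\ bel_stable A.
Proof.
case=> Aseq [Aseq0_strict Aseq_step <-].
by split; [exact: run_strict | exact: run_final_stable].
Qed.

Lemma stable_belitskii_canonical (F : fieldType) m (M : 'M[F]_m) :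
  strict_upper M -> bel_stable M -> belitskii_canonical M.
Proof.
move=> M_strict M_stable; exists (fun=> M); split=> // k ij kth.
apply: bel_step_const => entry_nz.
apply: normal_entry_sub (M_stable k ij kth entry_nz) => x [g g_grp <-].
by exists g => //; apply/bel_group_const.
Qed.

Section Blocks.
Variable F : fieldType.

Lemma upper_mx_dlsubmx p q (g : 'M[F]_(p + q)) : upper_mx g -> dlsubmx g = 0.
Proof. by move=> g_up; apply/matrixP => i j; rewrite !mxE g_up //= ltn_addr. Qed.

Lemma inv_upper_ulsubmx p q (g : 'M[F]_(p + q)) :
  inv_upper g -> inv_upper (ulsubmx g).
Proof.
move=> g_inv; have [_ g_up] := g_inv.
have ul_up : upper_mx (ulsubmx g) by move=> i j lt_ji; rewrite !mxE g_up.
split; rewrite // upper_mx_unitmxE //; apply/forallP => i; rewrite !mxE.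
exact: inv_upper_diag_neq0.
Qed.

Lemma inv_upper_drsubmx p q (g : 'M[F]_(p + q)) :
  inv_upper g -> inv_upper (drsubmx g).
Proof.
move=> g_inv; have [_ g_up] := g_inv.
have dr_up : upper_mx (drsubmx g).
  by move=> i j lt_ji; rewrite !mxE g_up //= ltn_add2l.
split; rewrite // upper_mx_unitmxE //; apply/forallP => i; rewrite !mxE.
exact: inv_upper_diag_neq0.
Qed.

Lemma conjmx_block_upper p q (g X : 'M[F]_(p + q)) : inv_upper g -> upper_mx X ->
  ulsubmx (conjmx g X) = conjmx (ulsubmx g) (ulsubmx X) /\
  drsubmx (conjmx g X) = conjmx (drsubmx g) (drsubmx X).
Proof.
move=> g_inv X_up; have [g_unit g_up] := g_inv.
have N_dl : dlsubmx (conjmx g X) = 0 by apply/upper_mx_dlsubmx/upper_mx_conjmx.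
have gX_g : conjmx g X *m g = g *m X by rewrite /conjmx mulmxKV.
move: gX_g N_dl; set N := conjmx g X => gX_g N_dl.
rewrite -[N]submxK -[g]submxK -[X]submxK N_dl !upper_mx_dlsubmx // in gX_g.
move: gX_g; rewrite !mulmx_block !mul0mx !mulmx0 !addr0 !add0r.
case/eq_block_mx => ul_eq _ _ dr_eq.
have [[ul_unit _] [dr_unit _]] := (inv_upper_ulsubmx g_inv, inv_upper_drsubmx g_inv).
by rewrite /conjmx -ul_eq -dr_eq !mulmxK.
Qed.

Lemma strict_upper_block p q (A1 : 'M[F]_p) (A2 : 'M[F]_q) (B : 'M[F]_(p, q)) :
  strict_upper A1 -> strict_upper A2 -> strict_upper (block_mx A1 B 0 A2).
Proof.
move=> A1_strict A2_strict i j.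
case: (split_ordP i) => i' ->; case: (split_ordP j) => j' -> /=.
- by rewrite block_mxEul; exact: A1_strict.
- by have := ltn_ord i'; lia.
- by rewrite block_mxEdl mxE.
- by rewrite block_mxEdr leq_add2l; exact: A2_strict.
Qed.

End Blocks.

Section Restriction.
Variables (F : fieldType) (m m' c : nat) (e : 'I_m -> 'I_m').
Variables (C : 'M[F]_m' -> 'M[F]_m) (X : 'M[F]_m').
Hypothesis e_shift : forall a, e a = c + a :> nat.
Hypothesis C_entry : forall Y a b, C Y a b = Y (e a) (e b).
Hypothesis C_conj :
  forall g, inv_upper g -> inv_upper (C g) /\ C (conjmx g X) = conjmx (C g) (C X).

Lemma stab_values_restrict k k' i j :
  onth (bel_positions m) k = Some (i, j) ->
  onth (bel_positions m') k' = Some (e i, e j) ->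
  forall x, stab_values k' X (e i, e j) x -> stab_values k (C X) (i, j) x.
Proof.
move=> kth k'th x [g [g_inv gX] <-]; have [Cg_inv Cg_conj] := C_conj g_inv.
exists (C g); last by rewrite /= -Cg_conj C_entry.
split=> // [[a b]].
rewrite (mem_take_bel_positions _ kth) => /andP [lt_ab ab_lt_ij].
rewrite /= -Cg_conj !C_entry; apply: (gX (e a, e b)).
rewrite (mem_take_bel_positions _ k'th) /bel_lt /= !e_shift !ltn_add2l eqn_add2l.
exact/andP.
Qed.

Lemma normal_entry_restrict k' i j : bel_stable (C X) ->
  onth (bel_positions m') k' = Some (e i, e j) -> X (e i) (e j) != 0 ->
  normal_entry (stab_values k' X (e i, e j)) (X (e i) (e j)).
Proof.
move=> CX_stable k'th entry_nz.
have lt_ij : (i < j)%N.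
  have : (e i, e j) \in bel_positions m' by apply/onthP; exists k'.
  by rewrite mem_bel_positions /= !e_shift ltn_add2l.
have /onthP [k kth] : (i, j) \in bel_positions m by rewrite mem_bel_positions.
apply: normal_entry_sub (stab_values_restrict kth k'th) _.
by rewrite -C_entry; apply: CX_stable kth _; rewrite C_entry.
Qed.

End Restriction.

Section Pivot.
Variable F : fieldType.

Lemma unipotent_inv_upper m (U : 'M[F]_m) : unipotent_upper U -> inv_upper U.
Proof.
case=> U_up U_diag; split=> //; rewrite upper_mx_unitmxE //.
by apply/forallP => i; rewrite U_diag oner_neq0.
Qed.

(* Compare the (i, j) entries of (g Q U g^-1) (g U^-1) = g Q: on the left only
   the term (g Q U g^-1) i j * (g U^-1) j j survives, on the right g i i. *)
Lemma conjmx_pivot_neq0 m (Q U g : 'M[F]_m) (i j : 'I_m) :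
  unipotent_upper U -> inv_upper g -> (forall a, Q a j = (a == i)%:R) ->
  (forall b : 'I_m, (b < j)%N -> conjmx g (Q *m U) i b = 0) ->
  conjmx g (Q *m U) i j != 0.
Proof.
move=> U_unip g_inv Q_col N_row; have U_inv := unipotent_inv_upper U_unip.
have [[g_unit g_up] [U_unit _]] := (g_inv, U_inv).
set N := conjmx g (Q *m U).
have N_gU : N *m (g *m invmx U) = g *m Q.
  by rewrite /N /conjmx !mulmxA mulmxKV // mulmxK.
have gU_up : upper_mx (g *m invmx U).
  exact: upper_mx_mul g_up (upper_mx_invmx U_inv).
have := congr1 (fun M : 'M[F]_m => M i j) N_gU; rewrite [LHS]mxE [RHS]mxE.
rewrite (bigD1 j) //= big1 => [|b b_neq_j]; last first.
  case: (ltngtP b j) => [lt_bj | lt_jb | /val_inj eq_bj].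
  - by rewrite N_row ?mul0r.
  - by rewrite gU_up ?mulr0.
  - by rewrite eq_bj eqxx in b_neq_j.
rewrite (bigD1 i) //= big1 => [|a a_neq_i]; last first.
  by rewrite Q_col (negbTE a_neq_i) mulr0.
rewrite Q_col eqxx mulr1 !addr0 => N_ij; apply/eqP => N_ij0.
by have := inv_upper_diag_neq0 i g_inv; rewrite -N_ij N_ij0 mul0r eqxx.
Qed.

Lemma normal_entry_pivot m (Q U : 'M[F]_m) k i j :
  subperm_mx Q -> unipotent_upper U -> strict_upper (Q *m U) -> Q i j != 0 ->
  onth (bel_positions m) k = Some (i, j) ->
  normal_entry (stab_values k (Q *m U) (i, j)) ((Q *m U) i j).
Proof.
move=> [Q01 [Q_row Q_col]] U_unip QU_strict Qij_nz kth.
have Qij1 : Q i j = 1 by case: (Q01 i j) Qij_nz => ->; rewrite ?eqxx.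
have QU_row b : (Q *m U) i b = U j b.
  rewrite mxE (bigD1 j) //= Qij1 mul1r big1 ?addr0 // => a a_neq_j.
  have [-> | Qia_nz] := eqVneq (Q i a) 0; first by rewrite mul0r.
  by rewrite (Q_row _ _ _ Qia_nz Qij_nz) eqxx in a_neq_j.
have Q_unit_col a : Q a j = (a == i)%:R.
  have [-> | a_neq_i] := eqVneq a i; first by rewrite Qij1.
  have [// | Qaj1] := Q01 a j.
  have Qaj_nz : Q a j != 0 by rewrite Qaj1 oner_neq0.
  by rewrite (Q_col _ _ _ Qaj_nz Qij_nz) eqxx in a_neq_i.
have [U_up U_diag] := U_unip.
split=> [all_values | _]; last by rewrite QU_row U_diag.
have [g [g_inv gQU] /eqP] := all_values 0; apply/negP.
apply: (conjmx_pivot_neq0 U_unip g_inv Q_unit_col) => b lt_bj.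
have [le_bi | lt_ib] := leqP b i.
  exact: (strict_upper_conjmx g_inv QU_strict).
rewrite (gQU (i, b)) /= ?QU_row ?U_up //.
by rewrite (mem_take_bel_positions _ kth) /bel_lt /= lt_ib eqxx lt_bj orbT.
Qed.

End Pivot.

Section BlockFactorization.
Variable F : fieldType.

Lemma unipotent_upper_block p q (U1 : 'M[F]_p) (U2 : 'M[F]_q) :
  unipotent_upper U1 -> unipotent_upper U2 -> unipotent_upper (block_mx U1 0 0 U2).
Proof.
move=> [U1_up U1_diag] [U2_up U2_diag]; split=> [i j | i].
  case: (split_ordP i) => i' ->; case: (split_ordP j) => j' -> /=.
  - by rewrite block_mxEul; exact: U1_up.
  - by rewrite block_mxEur mxE.
  - by rewrite block_mxEdl mxE.
  - by rewrite block_mxEdr ltn_add2l; exact: U2_up.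
by case: (split_ordP i) => i' ->; rewrite ?block_mxEul ?block_mxEdr.
Qed.

Lemma unipotent_upper_reset_rows m (P : pred 'I_m) (U : 'M[F]_m) :
  unipotent_upper U ->
  unipotent_upper (\matrix_(a, b) if P a then (1%:M : 'M[F]_m) a b else U a b).
Proof.
move=> [U_up U_diag]; split=> [a b lt_ba | a]; rewrite !mxE; case: ifP => _.
- by rewrite (gtn_eqF lt_ba : (a == b) = false).
- exact: U_up.
- by rewrite eqxx.
- exact: U_diag.
Qed.

(* Rows of U2 indexed by the nonzero columns of B are replaced by rows of the
   identity; Q2 never sees these rows since those columns of Q2 vanish. *)
Lemma subperm_block_factor p q (Q1 U1 : 'M[F]_p) (Q2 U2 : 'M[F]_q) (B : 'M[F]_(p, q)) :
  subperm_mx (block_mx Q1 B 0 Q2) -> unipotent_upper U1 -> unipotent_upper U2 ->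
  exists2 U, unipotent_upper U &
    block_mx (Q1 *m U1) B 0 (Q2 *m U2) = block_mx Q1 B 0 Q2 *m U.
Proof.
move=> [_ [_ Q_col]] U1_unip U2_unip.
pose U2' :=
  \matrix_(a, b) if [exists r, B r a != 0] then (1%:M : 'M[F]_q) a b else U2 a b.
exists (block_mx U1 0 0 U2').
  exact/unipotent_upper_block/unipotent_upper_reset_rows.
have B_U2' : B *m U2' = B.
  rewrite -[RHS]mulmx1; apply/matrixP => r b; rewrite !mxE; apply: eq_bigr => a _.
  rewrite mxE; case: ifPn => // /existsPn /(_ r) /negPn /eqP ->.
  by rewrite !mul0r.
have Q2_U2' : Q2 *m U2' = Q2 *m U2.
  apply/matrixP => r b; rewrite !mxE; apply: eq_bigr => a _.
  rewrite mxE; case: ifPn => // /existsP [r' Br'a_nz].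
  have [-> | Q2ra_nz] := eqVneq (Q2 r a) 0; first by rewrite !mul0r.
  have := Q_col (lshift q r') (rshift p r) (rshift p a).
  rewrite block_mxEur block_mxEdr => /(_ Br'a_nz Q2ra_nz) /(congr1 val) /=.
  by have := ltn_ord r'; lia.
by rewrite mulmx_block !mulmx0 !mul0mx !addr0 !add0r B_U2' Q2_U2'.
Qed.

End BlockFactorization.

Lemma bel_stable_block (F : fieldType) p q (A1 Q1 : 'M[F]_p) (A2 Q2 : 'M[F]_q)
    (B : 'M[F]_(p, q)) (U : 'M[F]_(p + q)) :
  strict_upper A1 -> bel_stable A1 -> strict_upper A2 -> bel_stable A2 ->
  subperm_mx (block_mx Q1 B 0 Q2) -> unipotent_upper U ->
  block_mx A1 B 0 A2 = block_mx Q1 B 0 Q2 *m U ->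
  bel_stable (block_mx A1 B 0 A2).
Proof.
move=> A1_strict A1_stable A2_strict A2_stable Q_subperm U_unip M_QU.
set M := block_mx A1 B 0 A2 in M_QU *.
have M_strict : strict_upper M by exact: strict_upper_block.
have M_up : upper_mx M by move=> i j /ltnW; exact: M_strict.
have corners g : inv_upper g ->
    ulsubmx (conjmx g M) = conjmx (ulsubmx g) (ulsubmx M) /\
    drsubmx (conjmx g M) = conjmx (drsubmx g) (drsubmx M).
  by move=> g_inv; exact: conjmx_block_upper.
move=> k [i j]; case: (split_ordP i) => i' ->; case: (split_ordP j) => j' -> kth /=.
- apply: (normal_entry_restrict (c := 0) (C := ulsubmx)) kth => //.
  + by move=> Y a b; rewrite !mxE.
  + by move=> g g_inv; split; [exact: inv_upper_ulsubmx | case: (corners g g_inv)].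
  + by rewrite block_mxKul.
- move=> entry_nz; rewrite M_QU.
  apply: normal_entry_pivot => //; first by rewrite -M_QU.
  by rewrite block_mxEur; rewrite /M block_mxEur in entry_nz.
- by rewrite /M block_mxEdl mxE eqxx.
- apply: (normal_entry_restrict (c := p) (C := drsubmx)) kth => //.
  + by move=> Y a b; rewrite !mxE.
  + by move=> g g_inv; split; [exact: inv_upper_drsubmx | case: (corners g g_inv)].
  + by rewrite block_mxKdr.
Qed.

Theorem theorem2p7 (F : fieldType) (p q : nat)
  (A1 Q1 : 'M[F]_p) (A2 Q2 : 'M[F]_q) (Q12 : 'M[F]_(p, q)) :
  belitskii_canonical A1 -> belitskii_canonical A2 ->
  subperm_mx Q1 -> strict_upper Q1 ->
  subperm_mx Q2 -> strict_upper Q2 ->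
  (exists2 U : 'M[F]_p, unipotent_upper U & A1 = Q1 *m U) ->
  (exists2 U : 'M[F]_q, unipotent_upper U & A2 = Q2 *m U) ->
  subperm_mx (block_mx Q1 Q12 0 Q2) ->
  belitskii_canonical (block_mx A1 Q12 0 A2).
Proof.
move=> A1_canon A2_canon _ _ _ _ [U1 U1_unip A1_QU] [U2 U2_unip A2_QU] Q_subperm.
have [A1_strict A1_stable] := belitskii_canonical_stable A1_canon.
have [A2_strict A2_stable] := belitskii_canonical_stable A2_canon.
have [U U_unip] := subperm_block_factor Q_subperm U1_unip U2_unip.
rewrite -A1_QU -A2_QU => M_QU.
apply: stable_belitskii_canonical; first exact: strict_upper_block.
exact: bel_stable_block Q_subperm U_unip M_QU.
Qed.
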